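(* Let $X_1,\dots,X_n$ be variables with ranges $D_1,\dots,D_n$ and let $A_1,\dots,A_m$ be events (sets of full assignments), $A_i$ depending only on the variables indexed by $\mathrm{vbl}(A_i)\subseteq[n]$, with dependency graph $G$ on $[m]$ (distinct $i,j$ adjacent iff $\mathrm{vbl}(A_i)\cap\mathrm{vbl}(A_j)\neq\emptyset$). Let $\sigma$ be an assignment and let $\sigma'$ be another assignment such that $\mathrm{Bad}(\sigma')\subseteq\mathrm{Res}(\sigma)$ and $\sigma,\sigma'$ agree on all variables in $\mathrm{vbl}(\mathrm{Res}(\sigma))$. Then $\mathrm{Res}(\sigma')=\mathrm{Res}(\sigma)$.
   Context: Notation: $\mathrm{Bad}(\sigma)=\{i:\sigma\in A_i\}$; for $S\subseteq[m]$, $\partial S=\{i\notin S:\ i\text{ adjacent in }G\text{ to some }j\in S\}$ and $\mathrm{vbl}(S)=\bigcup_{i\in S}\mathrm{vbl}(A_i)$. We write $A_i\cap\sigma_S=\emptyset$ if either $\mathrm{vbl}(A_i)\cap\mathrm{vbl}(S)=\emptyset$, or no assignment agreeing with $\sigma$ on $\mathrm{vbl}(A_i)\cap\mathrm{vbl}(S)$ belongs to $A_i$; otherwise $A_i\cap\sigma_S\ne\emptyset$. $\mathrm{Res}(\sigma)$ is the output of the procedure: start with $R=\mathrm{Bad}(\sigma)$, $N=\emptyset$; while $\partial R\setminus N\neq\emptyset$, for each $i\in\partial R\setminus N$ (with $R$ the current set), put $i$ into $R$ if $A_i\cap\sigma_R\ne\emptyset$ and into $N$ otherwise; finally output $R$.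 *)

From mathcomp Require Import all_boot.
From mathcomp Require Import boolp.

Set Implicit Arguments.
Unset Strict Implicit.
Unset Printing Implicit Defensive.

Section LLL.
Variables (n m : nat) (D : 'I_n -> Type).

Definition assignment := forall k : 'I_n, D k.

Variables (A : 'I_m -> assignment -> Prop) (vbl : 'I_m -> {set 'I_n}).

Definition agree_on (S : {set 'I_n}) (s t : assignment) : Prop :=
  forall k, k \in S -> s k = t k.

Definition depends_only : Prop :=
  forall i s t, agree_on (vbl i) s t -> (A i s <-> A i t).

Definition vblS (S : {set 'I_m}) : {set 'I_n} := \bigcup_(i in S) vbl i.

Definition adj (i j : 'I_m) : bool := (i != j) && (vbl i :&: vbl j != set0).

Definition bdry (S : {set 'I_m}) : {set 'I_m} :=
  [set i | (i \notin S) && [exists j in S, adj i j]].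

Definition Bad (s : assignment) : {set 'I_m} := [set i | `[< A i s >]].

(* "A_i ∩ sigma_S ≠ ∅" *)
Definition meets (i : 'I_m) (s : assignment) (S : {set 'I_m}) : Prop :=
  (vbl i :&: vblS S != set0) /\
  exists t, agree_on (vbl i :&: vblS S) s t /\ A i t.

Definition res_step (s : assignment) (RN : {set 'I_m} * {set 'I_m}) (i : 'I_m) :=
  if `[< meets i s RN.1 >] then (i |: RN.1, RN.2) else (RN.1, i |: RN.2).

(* one iteration of the while loop: for each i in ∂R \ N (increasing order) *)
Definition res_round (s : assignment) (RN : {set 'I_m} * {set 'I_m}) :=
  foldl (res_step s) RN (enum (bdry RN.1 :\: RN.2)).

(* the while loop; each non-final round adds a new element to R ∪ N, so
   m.+1 rounds reach the fixed point (after which rounds do nothing). *)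
Definition Res (s : assignment) : {set 'I_m} :=
  (iter m.+1 (res_round s) (Bad s, set0)).1.

End LLL.

From mathcomp Require Import all_boot.
From mathcomp Require Import boolp.

(* The procedure computing Res(σ) only ever inspects σ through the events
   A_i with i ∈ Bad(σ) (to initialise R) and through the tests
   "A_i ∩ σ_R ≠ ∅" for sets R that only grow and thus stay inside Res(σ).
   Such a test depends on σ only on vbl(R) ⊆ vbl(Res(σ)), where σ' agrees
   with σ.  Moreover Bad(σ') = Bad(σ): both lie inside Res(σ), on which the
   events see the same values.  Hence the runs on σ and σ' coincide step by
   step. *)

Set Implicit Arguments.
Unset Strict Implicit.
Unset Printing Implicit Defensive.

Section AgreeOn.
Variables (n : nat) (D : 'I_n -> Type).
Implicit Types (S T : {set 'I_n}) (s t u : assignment D).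

Lemma agree_onW S T s t : S \subset T -> agree_on T s t -> agree_on S s t.
Proof. by move=> /subsetP sST agT k /sST; apply: agT. Qed.

Lemma agree_on_sym S s t : agree_on S s t -> agree_on S t s.
Proof. by move=> agS k /agS. Qed.

Lemma agree_on_trans S s t u :
  agree_on S s t -> agree_on S t u -> agree_on S s u.
Proof. by move=> ag1 ag2 k kS; rewrite ag1 ?ag2. Qed.

End AgreeOn.

Section ResProcedure.
Variables (n m : nat) (D : 'I_n -> Type).
Variables (A : 'I_m -> assignment D -> Prop) (vbl : 'I_m -> {set 'I_n}).
Implicit Types (RN : {set 'I_m} * {set 'I_m}) (i : 'I_m) (R F : {set 'I_m}).
Implicit Types (s t : assignment D).

Local Notation step s := (res_step A vbl s).
Local Notation round s := (res_round A vbl s).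

Lemma vblS_subset R F : R \subset F -> vblS vbl R \subset vblS vbl F.
Proof.
move=> /subsetP sRF; apply/bigcupsP => i iR.
exact: (bigcup_max _ (sRF i iR) (subxx (vbl i))).
Qed.

Lemma vbl_sub_vblS i F : i \in F -> vbl i \subset vblS vbl F.
Proof. exact: bigcup_sup. Qed.

Lemma res_step_subset s RN i : RN.1 \subset (step s RN i).1.
Proof. by rewrite /res_step; case: ifP => _ /=; rewrite ?subsetUr. Qed.

Lemma foldl_res_step_subset s l RN : RN.1 \subset (foldl (step s) RN l).1.
Proof.
elim: l RN => [|i l IHl] RN //=.
exact: subset_trans (res_step_subset s RN i) (IHl _).
Qed.

Lemma res_round_subset s RN : RN.1 \subset (round s RN).1.
Proof. exact: foldl_res_step_subset. Qed.

Lemma iter_res_round_subset s k RN : RN.1 \subset (iter k (round s) RN).1.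
Proof.
elim: k => [|k IHk] //=.
exact: subset_trans IHk (res_round_subset _ _).
Qed.

Lemma Bad_subset_Res s : Bad A s \subset Res A vbl s.
Proof. exact: (iter_res_round_subset s m.+1 (Bad A s, set0)). Qed.

Lemma meets_agree i R s t :
  agree_on (vbl i :&: vblS vbl R) s t -> meets A vbl i s R <-> meets A vbl i t R.
Proof.
move=> agst; rewrite /meets.
split=> -[ne [u [agu Au]]]; split=> //; exists u; split=> //.
- exact: agree_on_trans (agree_on_sym agst) agu.
- exact: agree_on_trans agst agu.
Qed.

Section Agreement.
Variables (F : {set 'I_m}) (s t : assignment D).
Hypothesis agF : agree_on (vblS vbl F) s t.

Lemma res_step_agree RN i : RN.1 \subset F -> step s RN i = step t RN i.
Proof.
move=> sRF; have agR := agree_onW (vblS_subset sRF) agF.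
by rewrite /res_step (asbool_equiv_eq (meets_agree (agree_onW (subsetIr _ _) agR))).
Qed.

Lemma foldl_res_step_agree l RN :
  (foldl (step s) RN l).1 \subset F -> foldl (step s) RN l = foldl (step t) RN l.
Proof.
elim: l RN => [|i l IHl] RN //= sF.
have sRF : RN.1 \subset F.
  exact: subset_trans (res_step_subset s RN i) (subset_trans (foldl_res_step_subset _ _ _) sF).
by rewrite -res_step_agree // IHl.
Qed.

Lemma iter_res_round_agree k RN :
  (iter k (round s) RN).1 \subset F -> iter k (round s) RN = iter k (round t) RN.
Proof.
elim: k => [|k IHk] //= sF.
have sF' := subset_trans (res_round_subset _ _) sF.
by rewrite -IHk //; apply: foldl_res_step_agree.
Qed.

Lemma Bad_agree : depends_only A vbl ->
  Bad A s \subset F -> Bad A t \subset F -> Bad A t = Bad A s.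
Proof.
move=> dep /subsetP sBsF /subsetP sBtF; apply/setP => i.
have [iF | iNF] := boolP (i \in F).
  rewrite /Bad !inE; apply: asbool_equiv_eq; apply: iff_sym.
  exact: dep (agree_onW (vbl_sub_vblS iF) agF).
apply/idP/idP => iBad; case/negP: iNF; [exact: sBtF | exact: sBsF].
Qed.

End Agreement.

End ResProcedure.

Theorem lemma24 (n m : nat) (D : 'I_n -> Type)
  (A : 'I_m -> assignment D -> Prop) (vbl : 'I_m -> {set 'I_n})
  (Hdep : depends_only A vbl) (s s' : assignment D) :
  Bad A s' \subset Res A vbl s ->
  agree_on (vblS vbl (Res A vbl s)) s s' ->
  Res A vbl s' = Res A vbl s.
Proof.
move=> Bad'_sub agree.
have Bad_eq : Bad A s' = Bad A s.
  exact: Bad_agree agree Hdep (Bad_subset_Res _ _ _) Bad'_sub.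
by rewrite {1}/Res Bad_eq -(iter_res_round_agree agree) ?subxx.
Qed.
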